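(* Consider a one-site PTM cascade with $n\ge1$ layers and positive total amounts. For each $i=0,\dots,n-1$ there is $\beta_i\in(0,\infty)$ such that: (a) $f_i$ is a continuous increasing function on $[0,\beta_i)$ with $f_i(0)=0$, mapping $[0,\beta_i)$ onto $[0,\infty)$; $\beta_i$ is the smallest positive singularity of $f_i$, and $d_{i+1}\big(f_{i+1}(\beta_i),f_{i+2}^Y(\beta_i)\big)=0$; (b) at the BMSS, $S_n^1\in[0,\beta_i)$ and $S_i^1=f_i(S_n^1)$ (with $S_0^1=E$); $f_i$ depends only on rate constants and on $\overline{F}_j,\overline{S}_j$ for $j\ge i+1$, and $f_i(s)=\frac{\lambda_{i+1}\cdots\lambda_n\overline{F}_{i+1}\cdots\overline{F}_n\,s}{d_{i+1}(f_{i+1}(s),f^Y_{i+2}(s))\cdots d_n(f_n(s),0)}$; (c) $\beta_{n-1}=\alpha_n$ and $\beta_i<\beta_{i+1}$ for $i<n-1$; (d) if all parameters except $\overline{S}_{i+1}$ are fixed and $\overline{S}_{i+1}\to+\infty$, then $\beta_i\to\beta_{i+1}$, where $\beta_n:=+\infty$; (e) at the BMSS, $S_j^1<\alpha_j$ for every $j=1,\dots,n$.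
   Context: A one-site PTM cascade with $n$ layers has species $E=S_0^1$ and, for $i=1,\dots,n$, $S_i^0,S_i^1,F_i,Y_i^0,Y_i^1$, with reactions $S_{i-1}^1+S_i^0 \rightleftharpoons Y_i^0 \to S_{i-1}^1+S_i^1$ (rate constants $a_i^0,b_i^0,c_i^0$) and $F_i+S_i^1\rightleftharpoons Y_i^1\to F_i+S_i^0$ (rate constants $a_i^1,b_i^1,c_i^1$), all positive, mass-action kinetics. Put $\delta_i=a_i^1/(b_i^1+c_i^1)$, $\gamma_i=(c_i^1/c_i^0)\delta_i$, $\lambda_i=\frac{b_i^0+c_i^0}{a_i^0}\gamma_i$. Given total amounts $\overline{E},\overline{F}_i,\overline{S}_i$, a steady state is a real solution of: $Y_i^0=\gamma_iF_iS_i^1$, $Y_i^1=\delta_iF_iS_i^1$, $\lambda_iF_iS_i^1=S_i^0S_{i-1}^1$, $\overline{F}_i=F_i+Y_i^1$, $\overline{S}_i=S_i^0+S_i^1+Y_i^0+Y_i^1+Y_{i+1}^0$ ($i=1,\dots,n$, $Y_{n+1}^0:=0$), $\overline{E}=E+Y_1^0$. A BMSS is a steady state with positive total amounts and all concentrations nonnegative; it exists and is unique. Increasing means strictly increasing. Define for $i=1,\dots,n$: $d_i(x,y)=(\overline{S}_i-y)-x-\overline{F}_i(\delta_i+\gamma_i)x+\delta_i(\overline{S}_i-y)x-\delta_ix^2$, and let $\alpha_i$ be the unique positive root of $x\mapsto d_i(x,0)$. Let $g_i^Y(x)=\frac{\gamma_i\overline{F}_ix}{1+\delta_ix}$. Define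 rational functions of $s$ recursively: $f_n(s)=s$, $f_{n+1}^Y(s)=0$, and for $i=n,\dots,1$: $f_i^Y(s)=g_i^Y(f_i(s))$, $f_{i-1}(s)=\frac{\lambda_i\overline{F}_if_i(s)}{d_i(f_i(s),f_{i+1}^Y(s))}$. *)

From Stdlib Require Import Reals Lra Lia Arith.
Open Scope R_scope.

(* Parameters of a one-site PTM cascade: rate constants a_i^0,b_i^0,c_i^0,
   a_i^1,b_i^1,c_i^1 and total amounts Fbar_i, Sbar_i (indexed by i = 1..n)
   and Ebar. *)
Record cascade := mkCascade {
  a0 : nat -> R; b0 : nat -> R; c0 : nat -> R;
  a1 : nat -> R; b1 : nat -> R; c1 : nat -> R;
  Fb : nat -> R; Sb : nat -> R; Eb : R }.

Definition params_pos (p : cascade) (n : nat) : Prop :=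
  0 < Eb p /\
  forall i, (1 <= i <= n)%nat ->
    0 < a0 p i /\ 0 < b0 p i /\ 0 < c0 p i /\
    0 < a1 p i /\ 0 < b1 p i /\ 0 < c1 p i /\
    0 < Fb p i /\ 0 < Sb p i.

Definition same_rates (p q : cascade) : Prop :=
  a0 p = a0 q /\ b0 p = b0 q /\ c0 p = c0 q /\
  a1 p = a1 q /\ b1 p = b1 q /\ c1 p = c1 q.

Definition setSb (p : cascade) (k : nat) (t : R) : cascade :=
  mkCascade (a0 p) (b0 p) (c0 p) (a1 p) (b1 p) (c1 p) (Fb p)
            (fun j => if Nat.eqb j k then t else Sb p j) (Eb p).

Definition delta (p : cascade) (i : nat) : R := a1 p i / (b1 p i + c1 p i).
Definition gamma (p : cascade) (i : nat) : R := (c1 p i / c0 p i) * delta p i.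
Definition lam (p : cascade) (i : nat) : R :=
  (b0 p i + c0 p i) / a0 p i * gamma p i.

Definition d (p : cascade) (i : nat) (x y : R) : R :=
  (Sb p i - y) - x - Fb p i * (delta p i + gamma p i) * x
  + delta p i * (Sb p i - y) * x - delta p i * x ^ 2.

Definition gY (p : cascade) (i : nat) (x : R) : R :=
  gamma p i * Fb p i * x / (1 + delta p i * x).

(* fpair p n k s = (f_{n-k}(s), f^Y_{n-k+1}(s)) for k <= n, following the
   recursion f_n(s)=s, f^Y_{n+1}(s)=0, f^Y_i = g^Y_i(f_i),
   f_{i-1} = lambda_i Fbar_i f_i / d_i(f_i, f^Y_{i+1}). *)
Fixpoint fpair (p : cascade) (n k : nat) (s : R) : R * R :=
  match k with
  | O => (s, 0)
  | S k' =>
      let (fi, fYi1) := fpair p n k' s in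
      let i := (n - k')%nat in
      (lam p i * Fb p i * fi / d p i fi fYi1, gY p i fi)
  end.

Definition ff (p : cascade) (n i : nat) (s : R) : R := fst (fpair p n (n - i) s).
Definition fY (p : cascade) (n i : nat) (s : R) : R := snd (fpair p n (n + 1 - i) s).

(* product of g j over i < j <= m *)
Fixpoint prodR (g : nat -> R) (i m : nat) : R :=
  match m with
  | O => 1
  | S m' => if Nat.ltb i (S m') then prodR g i m' * g (S m') else 1
  end.

(* A (pole-type) singularity of a real function g at x: g is unbounded in
   every punctured neighbourhood of x. *)
Definition singular_at (g : R -> R) (x : R) : Prop :=
  forall M eps, 0 < eps -> exists t, t <> x /\ Rabs (t - x) < eps /\ M < Rabs (g t).

Definition min_pos_sing (g : R -> R) (b : R) : Prop :=
  0 < b /\ singular_at g b /\ (forall s, 0 < s < b -> ~ singular_at g s).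

Definition cont_on_Ico (g : R -> R) (a b : R) : Prop :=
  forall x, a <= x < b -> forall eps, 0 < eps -> exists del, 0 < del /\
    forall y, a <= y < b -> Rabs (y - x) < del -> Rabs (g y - g x) < eps.

Definition incr_on_Ico (g : R -> R) (a b : R) : Prop :=
  forall x y, a <= x < b -> a <= y < b -> x < y -> g x < g y.

Definition onto_nonneg_Ico (g : R -> R) (a b : R) : Prop :=
  (forall x, a <= x < b -> 0 <= g x) /\
  (forall y, 0 <= y -> exists x, a <= x < b /\ g x = y).

(* Steady state: concentrations S^0_i, S^1_i, F_i, Y^0_i, Y^1_i (i=1..n),
   with E = S^1_0 stored as S1 0. *)
Definition steady_state (p : cascade) (n : nat)
  (S0 S1 F Y0 Y1 : nat -> R) : Prop :=
  (forall i, (1 <= i <= n)%nat ->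
     Y0 i = gamma p i * F i * S1 i /\
     Y1 i = delta p i * F i * S1 i /\
     lam p i * F i * S1 i = S0 i * S1 (i - 1)%nat /\
     Fb p i = F i + Y1 i /\
     Sb p i = S0 i + S1 i + Y0 i + Y1 i
              + (if Nat.eqb i n then 0 else Y0 (S i))) /\
  Eb p = S1 O + Y0 1%nat.

(* BMSS: steady state with all concentrations nonnegative
   (total amounts are positive by the standing hypothesis). *)
Definition BMSS (p : cascade) (n : nat) (S0 S1 F Y0 Y1 : nat -> R) : Prop :=
  steady_state p n S0 S1 F Y0 Y1 /\
  0 <= S1 O /\
  (forall i, (1 <= i <= n)%nat ->
     0 <= S0 i /\ 0 <= S1 i /\ 0 <= F i /\ 0 <= Y0 i /\ 0 <= Y1 i).

(* The denominator factors as d_i(x, y) = (1 + delta_i x) dred_i(x, y), where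
   dred_i(x, y) = Sbar_i - y - x - Fbar_i (delta_i + gamma_i) x / (1 + delta_i x) is
   strictly decreasing in x and nonincreasing in y.  Suppose f_i is continuous,
   increasing and unbounded on [0, beta_i) and f^Y_{i+1} is continuous and
   nondecreasing there, both vanishing at 0.  Then s |-> d_i(f_i s, f^Y_{i+1} s) starts
   at Sbar_i > 0 and changes sign exactly once, at some beta_{i-1} < beta_i, and on
   [0, beta_{i-1}) the function f_{i-1} = lambda_i Fbar_i f_i / d_i
   = lambda_i Fbar_i sat_i(f_i) / dred_i(f_i, f^Y_{i+1}), with sat_i(x) = x / (1 + delta_i x)
   increasing and the denominator decreasing to 0, is again continuous, increasing and
   unbounded.  This is an induction downwards from
   f_n(s) = s.  At a BMSS the conservation laws give S_i^1 = f_i(S_n^1) with positive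
   denominators, so S_n^1 precedes every root.  Finally d_{i+1} is positive on any fixed
   [0, s0] once Sbar_{i+1} is large, which pushes beta_i up to beta_{i+1}. *)
From Stdlib Require Import Reals Lra Lia Psatz Ranalysis Ranalysis5.
Open Scope R_scope.

Ltac continuity_pt_tac :=
  repeat first
    [ assumption
    | apply continuity_pt_plus | apply continuity_pt_minus | apply continuity_pt_opp
    | apply continuity_pt_mult
    | apply continuity_pt_const; intros ? ?; reflexivity ].

Lemma continuity_pt_eps (f : R -> R) x :
  continuity_pt f x -> forall eps, 0 < eps ->
  exists del, 0 < del /\ forall y, Rabs (y - x) < del -> Rabs (f y - f x) < eps.
Proof.
  intros hf eps heps. destruct (hf eps heps) as [del [hdel hball]].
  exists del; split; [exact hdel |].
  intros y hy. destruct (Req_dec y x) as [-> | hne].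
  - rewrite Rminus_diag, Rabs_R0; exact heps.
  - apply (hball y). split; [split; [exact I | auto] | exact hy].
Qed.

Lemma continuity_pt_not_singular g x : continuity_pt g x -> ~ singular_at g x.
Proof.
  intros hg hsing. destruct (continuity_pt_eps g x hg 1 Rlt_0_1) as [del [hdel hball]].
  destruct (hsing (Rabs (g x) + 1) del hdel) as [t [_ [ht hbig]]].
  specialize (hball t ht).
  pose proof (Rabs_triang (g t - g x) (g x)) as htri.
  replace (g t - g x + g x) with (g t) in htri by ring.
  lra.
Qed.

Lemma ratio_lt a1 a2 b1 b2 : 0 <= a1 < a2 -> 0 < b2 <= b1 -> a1 / b1 < a2 / b2.
Proof.
  intros ha hb. apply Rle_lt_trans with (a1 / b2).
  - apply Rmult_le_compat_l; [lra |]. apply Rinv_le_contravar; lra.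
  - apply Rmult_lt_compat_r; [apply Rinv_0_lt_compat |]; lra.
Qed.

Lemma ratio_unbounded (u v : R -> R) a z :
  a < z -> continuity_pt v z -> v z = 0 -> 0 < u a ->
  (forall s, a <= s < z -> 0 < v s /\ u a <= u s) ->
  forall M, exists s, a <= s < z /\ M < u s / v s.
Proof.
  intros haz hv hvz hua hpos M.
  set (K := Rabs M + 1).
  assert (hK : 0 < K) by (pose proof (Rabs_pos M); unfold K; lra).
  destruct (continuity_pt_eps v z hv (u a / K)) as [del [hdel hball]].
  { apply Rdiv_lt_0_compat; assumption. }
  set (s := Rmax a (z - del / 2)).
  assert (hs : a <= s < z) by (split; [apply Rmax_l | apply Rmax_lub_lt; lra]).
  assert (hsdel : z - del / 2 <= s) by apply Rmax_r.
  exists s; split; [exact hs |].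
  destruct (hpos s hs) as [hvs hus].
  assert (hsmall : v s * K < u a).
  { assert (hd : Rabs (s - z) < del).
    { rewrite Rabs_left; lra. }
    specialize (hball s hd). rewrite hvz, Rminus_0_r, Rabs_right in hball by lra.
    apply (Rmult_lt_compat_r K) in hball; [| exact hK].
    unfold Rdiv in hball. rewrite Rmult_assoc, Rinv_l, Rmult_1_r in hball; lra. }
  apply Rlt_le_trans with K; [pose proof (Rle_abs M); unfold K; lra |].
  apply Rmult_le_reg_r with (v s); [exact hvs |].
  unfold Rdiv. rewrite Rmult_assoc, Rinv_l, Rmult_1_r by lra. nra.
Qed.

Definition nondecr_on_Ico (g : R -> R) (a b : R) : Prop :=
  forall x y, a <= x < b -> a <= y < b -> x <= y -> g x <= g y.

Definition unbounded_on_Ico (g : R -> R) (a b : R) : Prop :=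
  forall M, exists x, a <= x < b /\ M < g x.

(* The properties of the pairs (f_i, f^Y_{i+1}) carried through the induction. *)
Record tame_on (f g : R -> R) (B : R) : Prop := {
  tame_f0 : f 0 = 0;
  tame_g0 : g 0 = 0;
  tame_cont_f : forall s, 0 <= s < B -> continuity_pt f s;
  tame_cont_g : forall s, 0 <= s < B -> continuity_pt g s;
  tame_incr : incr_on_Ico f 0 B;
  tame_mono : nondecr_on_Ico g 0 B }.

Record regular_on (f g : R -> R) (B : R) : Prop := {
  regular_pos : 0 < B;
  regular_tame : tame_on f g B;
  regular_unbounded : unbounded_on_Ico f 0 B }.

Lemma tame_bounds f g B s t : tame_on f g B -> 0 <= s <= t -> t < B ->
  0 <= f s <= f t /\ 0 <= g s <= g t.
Proof.
  intros [hf0 hg0 _ _ hincr hmono] hst htB.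
  assert (hf : forall u v, 0 <= u <= v -> v < B -> f u <= f v).
  { intros u v huv hvB. destruct (Req_dec u v) as [-> | hne]; [lra |].
    left; apply hincr; lra. }
  assert (hg : forall u v, 0 <= u <= v -> v < B -> g u <= g v)
    by (intros u v huv hvB; apply hmono; lra).
  assert (f 0 <= f s /\ f s <= f t) by (split; apply hf; lra).
  assert (g 0 <= g s /\ g s <= g t) by (split; apply hg; lra).
  lra.
Qed.

Lemma tame_on_ext f g f' g' B : (forall s, f s = f' s) -> (forall s, g s = g' s) ->
  tame_on f g B -> tame_on f' g' B.
Proof.
  intros ef eg [hf0 hg0 hcf hcg hincr hmono]. constructor.
  - rewrite <- ef; exact hf0.
  - rewrite <- eg; exact hg0.
  - intros s hs. apply (continuity_pt_locally_ext f f' 1 s Rlt_0_1); auto.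
  - intros s hs. apply (continuity_pt_locally_ext g g' 1 s Rlt_0_1); auto.
  - intros u v hu hv huv. rewrite <- !ef. auto.
  - intros u v hu hv huv. rewrite <- !eg. auto.
Qed.

Lemma regular_on_ext f g f' g' B : (forall s, f s = f' s) -> (forall s, g s = g' s) ->
  regular_on f g B -> regular_on f' g' B.
Proof.
  intros ef eg [hB htame hunb].
  constructor; [exact hB | exact (tame_on_ext _ _ _ _ _ ef eg htame) |].
  intros M. destruct (hunb M) as [s [hs hM]]. exists s. rewrite <- ef. auto.
Qed.

Lemma incr_unbounded_le f B1 B2 :
  incr_on_Ico f 0 B2 -> unbounded_on_Ico f 0 B1 -> B2 <= B1.
Proof.
  intros hincr hunb. destruct (Rle_lt_dec B2 B1) as [h | h]; [exact h | exfalso].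
  destruct (hunb (f B1)) as [s [hs hM]].
  assert (f s < f B1) by (apply hincr; lra). lra.
Qed.

Lemma regular_on_unique f g g' B1 B2 : regular_on f g B1 -> regular_on f g' B2 -> B1 = B2.
Proof.
  intros [_ [_ _ _ _ hi1 _] hu1] [_ [_ _ _ _ hi2 _] hu2].
  apply Rle_antisym; apply incr_unbounded_le with f; assumption.
Qed.

Lemma regular_on_cont f g B : regular_on f g B -> cont_on_Ico f 0 B.
Proof.
  intros hreg x hx eps heps.
  destruct (continuity_pt_eps f x (tame_cont_f _ _ _ (regular_tame _ _ _ hreg) x hx) eps heps)
    as [del [hdel hball]].
  exists del; split; [exact hdel |]. intros y _ hy. exact (hball y hy).
Qed.

Lemma regular_on_onto f g B : regular_on f g B -> onto_nonneg_Ico f 0 B.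
Proof.
  intros [hB htame hunb]. split.
  { intros s hs. apply (tame_bounds f g B s s htame); lra. }
  intros y hy. destruct (Req_dec y 0) as [-> | hy0].
  { exists 0. split; [lra | exact (tame_f0 _ _ _ htame)]. }
  destruct (hunb y) as [s1 [hs1 hfs1]].
  pose proof (tame_f0 _ _ _ htame) as hf0.
  assert (hs1pos : 0 < s1) by (destruct (Req_dec s1 0) as [e | e]; [rewrite e in hfs1 |]; lra).
  destruct (IVT_interv (fun s => f s - y) 0 s1) as [z [hz hfz]].
  - intros a ha. apply continuity_pt_minus.
    + apply (tame_cont_f _ _ _ htame); lra.
    + apply continuity_pt_const; intros ? ?; reflexivity.
  - exact hs1pos.
  - rewrite hf0; lra.
  - lra.
  - exists z. split; lra.
Qed.

Lemma regular_on_sing f g B : regular_on f g B -> min_pos_sing f B.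
Proof.
  intros [hB htame hunb]. split; [exact hB | split].
  - intros M eps heps. destruct (hunb (Rabs M)) as [s0 [hs0 hM]].
    set (r := Rmin eps B).
    assert (hr : 0 < r <= eps /\ r <= B)
      by (unfold r; repeat split; [apply Rmin_glb_lt | apply Rmin_l | apply Rmin_r]; lra).
    set (t := Rmax s0 (B - r / 2)).
    assert (ht : s0 <= t /\ B - r / 2 <= t /\ t < B)
      by (unfold t; repeat split; [apply Rmax_l | apply Rmax_r | apply Rmax_lub_lt]; lra).
    exists t. split; [lra | split; [rewrite Rabs_left; lra |]].
    destruct (tame_bounds f g B s0 t htame) as [[hf0 hft] _]; [lra | lra |].
    pose proof (Rle_abs M). rewrite Rabs_right; lra.
  - intros s hs. apply continuity_pt_not_singular, (tame_cont_f _ _ _ htame); lra.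
Qed.

Lemma regular_on_props f g B : regular_on f g B ->
  f 0 = 0 /\ cont_on_Ico f 0 B /\ incr_on_Ico f 0 B /\ onto_nonneg_Ico f 0 B /\
  min_pos_sing f B.
Proof.
  intros hreg. pose proof (regular_tame _ _ _ hreg) as htame.
  repeat split.
  - exact (tame_f0 _ _ _ htame).
  - exact (regular_on_cont _ _ _ hreg).
  - exact (tame_incr _ _ _ htame).
  - exact (proj1 (regular_on_onto _ _ _ hreg)).
  - exact (proj2 (regular_on_onto _ _ _ hreg)).
  - exact (regular_pos _ _ _ hreg).
  - exact (proj1 (proj2 (regular_on_sing _ _ _ hreg))).
  - exact (proj2 (proj2 (regular_on_sing _ _ _ hreg))).
Qed.

Definition layer_pos (p : cascade) (j : nat) : Prop :=
  0 < delta p j /\ 0 < gamma p j /\ 0 < lam p j /\ 0 < Fb p j /\ 0 < Sb p j.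

Lemma layer_pos_of p n j : params_pos p n -> (1 <= j <= n)%nat -> layer_pos p j.
Proof.
  intros [_ hpos] hj.
  destruct (hpos j hj) as (ha0 & hb0 & hc0 & ha1 & hb1 & hc1 & hF & hS).
  assert (hd : 0 < delta p j) by (apply Rdiv_lt_0_compat; lra).
  assert (hg : 0 < gamma p j) by (apply Rmult_lt_0_compat; [apply Rdiv_lt_0_compat |]; lra).
  repeat split; try assumption.
  apply Rmult_lt_0_compat; [apply Rdiv_lt_0_compat |]; lra.
Qed.

Definition sat (p : cascade) (j : nat) (x : R) : R := x / (1 + delta p j * x).

Definition dred (p : cascade) (j : nat) (x y : R) : R :=
  Sb p j - y - x - Fb p j * (delta p j + gamma p j) * sat p j x.

Section Denominator.
Variables (p : cascade) (j : nat).
Hypothesis hp : layer_pos p j.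

Lemma sat_bounds x : 0 <= x -> 0 <= sat p j x <= x.
Proof.
  intros hx. destruct hp as (hd & _). unfold sat.
  assert (h1 : 1 <= 1 + delta p j * x) by nra.
  split; [unfold Rdiv; apply Rmult_le_pos; [lra | apply Rlt_le, Rinv_0_lt_compat; lra] |].
  apply Rmult_le_reg_r with (1 + delta p j * x); [lra |].
  unfold Rdiv. rewrite Rmult_assoc, Rinv_l by lra. nra.
Qed.

Lemma sat_lt x1 x2 : 0 <= x1 < x2 -> sat p j x1 < sat p j x2.
Proof.
  intros hx. destruct hp as (hd & _).
  assert (h1 : 0 < 1 + delta p j * x1) by nra.
  assert (h2 : 0 < 1 + delta p j * x2) by nra.
  assert (e : sat p j x2 - sat p j x1
              = (x2 - x1) / ((1 + delta p j * x1) * (1 + delta p j * x2)))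
    by (unfold sat; field; lra).
  assert (0 < (x2 - x1) / ((1 + delta p j * x1) * (1 + delta p j * x2)))
    by (apply Rdiv_lt_0_compat; [lra | apply Rmult_lt_0_compat; lra]).
  lra.
Qed.

Lemma sat_le x1 x2 : 0 <= x1 <= x2 -> sat p j x1 <= sat p j x2.
Proof.
  intros hx. destruct (Req_dec x1 x2) as [-> | hne]; [lra |]. left; apply sat_lt; lra.
Qed.

Lemma d_dred x y : 0 <= x -> d p j x y = (1 + delta p j * x) * dred p j x y.
Proof.
  intros hx. destruct hp as (hd & _).
  unfold d, dred, sat. field. nra.
Qed.

Lemma d_pos_iff x y : 0 <= x -> 0 < d p j x y <-> 0 < dred p j x y.
Proof.
  intros hx. destruct hp as (hd & _). rewrite d_dred by exact hx.
  assert (0 < 1 + delta p j * x) by nra.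
  split; intros h; nra.
Qed.

Lemma d_eq0_dred x y : 0 <= x -> d p j x y = 0 -> dred p j x y = 0.
Proof.
  intros hx hroot. destruct hp as (hd & _). rewrite d_dred in hroot by exact hx.
  apply Rmult_integral in hroot. destruct hroot as [h | h]; [nra | exact h].
Qed.

Lemma dred_le x1 x2 y1 y2 : 0 <= x1 <= x2 -> y1 <= y2 -> dred p j x2 y2 <= dred p j x1 y1.
Proof.
  intros hx hy. destruct hp as (hd & hg & _ & hF & _).
  pose proof (sat_le x1 x2 hx).
  assert (0 <= Fb p j * (delta p j + gamma p j)) by (apply Rmult_le_pos; lra).
  unfold dred. nra.
Qed.

Lemma dred_lt x1 x2 y1 y2 : 0 <= x1 < x2 -> y1 <= y2 -> dred p j x2 y2 < dred p j x1 y1.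
Proof.
  intros hx hy. destruct hp as (hd & hg & _ & hF & _).
  pose proof (sat_lt x1 x2 hx).
  assert (0 <= Fb p j * (delta p j + gamma p j)) by (apply Rmult_le_pos; lra).
  unfold dred. nra.
Qed.

Lemma d_pos_below_root x1 x2 y1 y2 :
  0 <= x1 < x2 -> y1 <= y2 -> d p j x2 y2 = 0 -> 0 < d p j x1 y1.
Proof.
  intros hx hy hroot. pose proof (d_eq0_dred x2 y2 ltac:(lra) hroot).
  apply d_pos_iff; [lra |]. pose proof (dred_lt x1 x2 y1 y2 hx hy). lra.
Qed.

Lemma d_nonpos_above_root x1 x2 y1 y2 :
  0 <= x2 <= x1 -> y2 <= y1 -> d p j x2 y2 = 0 -> d p j x1 y1 <= 0.
Proof.
  intros hx hy hroot. pose proof (d_eq0_dred x2 y2 ltac:(lra) hroot).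
  apply Rnot_lt_le. rewrite d_pos_iff by lra.
  pose proof (dred_le x2 x1 y2 y1 hx hy). lra.
Qed.

Lemma d_neg_above_Sb x y : Sb p j < x -> 0 <= y -> d p j x y < 0.
Proof.
  intros hx hy. destruct hp as (hd & hg & _ & hF & hS).
  pose proof (sat_bounds x ltac:(lra)).
  assert (0 <= Fb p j * (delta p j + gamma p j)) by (apply Rmult_le_pos; lra).
  assert (hred : dred p j x y < 0) by (unfold dred; nra).
  rewrite d_dred by lra. assert (0 < 1 + delta p j * x) by nra. nra.
Qed.

Lemma d_pos_of_small x y X Y : 0 <= x <= X -> 0 <= y <= Y ->
  Y + X + Fb p j * (delta p j + gamma p j) * X < Sb p j -> 0 < d p j x y.
Proof.
  intros hx hy hsmall. destruct hp as (hd & hg & _ & hF & _).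
  pose proof (sat_bounds x ltac:(lra)).
  assert (0 <= Fb p j * (delta p j + gamma p j)) by (apply Rmult_le_pos; lra).
  apply d_pos_iff; [lra |]. unfold dred. nra.
Qed.

Lemma d_root_unique x1 x2 : 0 <= x1 -> 0 <= x2 -> d p j x1 0 = 0 -> d p j x2 0 = 0 -> x1 = x2.
Proof.
  intros h1 h2 e1 e2.
  destruct (Rtotal_order x1 x2) as [h | [h | h]]; [exfalso | exact h | exfalso].
  - pose proof (d_pos_below_root x1 x2 0 0 (conj h1 h) (Rle_refl 0) e2). lra.
  - pose proof (d_pos_below_root x2 x1 0 0 (conj h2 h) (Rle_refl 0) e1). lra.
Qed.

Lemma gY_sat x : gY p j x = gamma p j * Fb p j * sat p j x.
Proof. unfold gY, sat, Rdiv. ring. Qed.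

Lemma gY_le x1 x2 : 0 <= x1 <= x2 -> 0 <= gY p j x1 <= gY p j x2.
Proof.
  intros hx. destruct hp as (hd & hg & _ & hF & _).
  rewrite !gY_sat. pose proof (sat_le x1 x2 hx). pose proof (sat_bounds x1 ltac:(lra)).
  assert (0 < gamma p j * Fb p j) by (apply Rmult_lt_0_compat; lra).
  split; nra.
Qed.

Lemma quotient_dred x y : 0 <= x ->
  lam p j * Fb p j * x / d p j x y = lam p j * Fb p j * (sat p j x / dred p j x y).
Proof. intros hx. rewrite d_dred by exact hx. unfold sat, Rdiv. rewrite Rinv_mult. ring. Qed.

End Denominator.

Lemma tame_cont_d p j x y B s : tame_on x y B -> 0 <= s < B ->
  continuity_pt (fun t => d p j (x t) (y t)) s.
Proof.
  intros htame hs.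
  pose proof (tame_cont_f _ _ _ htame s hs). pose proof (tame_cont_g _ _ _ htame s hs).
  unfold d. continuity_pt_tac.
Qed.

Section LayerStep.
Variables (p : cascade) (j : nat) (x y : R -> R) (B z : R).
Hypotheses (hp : layer_pos p j) (htame : tame_on x y B) (hz : 0 < z < B)
  (hroot : d p j (x z) (y z) = 0).

Lemma d_pos_before_root s : 0 <= s < z -> 0 < d p j (x s) (y s).
Proof.
  intros hs.
  destruct (tame_bounds x y B s z htame) as [[hxs _] [_ hyz]]; [lra | lra |].
  apply (d_pos_below_root p j hp _ (x z) _ (y z)); [| exact hyz | exact hroot].
  split; [exact hxs | apply (tame_incr _ _ _ htame); lra].
Qed.

Lemma tame_next :
  tame_on (fun s => lam p j * Fb p j * x s / d p j (x s) (y s)) (fun s => gY p j (x s)) z.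
Proof.
  pose proof hp as (hd & _ & hl & hF & _).
  assert (hx : forall s, 0 <= s < z -> 0 <= x s)
    by (intros s hs; apply (tame_bounds x y B s s htame); lra).
  constructor.
  - rewrite (tame_f0 _ _ _ htame). unfold Rdiv. ring.
  - rewrite (tame_f0 _ _ _ htame). unfold gY, Rdiv. ring.
  - intros s hs. apply continuity_pt_div.
    + continuity_pt_tac. apply (tame_cont_f _ _ _ htame); lra.
    + apply (tame_cont_d p j x y B s htame). lra.
    + pose proof (d_pos_before_root s hs). lra.
  - intros s hs. unfold gY. apply continuity_pt_div.
    + continuity_pt_tac. apply (tame_cont_f _ _ _ htame); lra.
    + continuity_pt_tac. apply (tame_cont_f _ _ _ htame); lra.
    + pose proof (hx s hs). nra.
  - intros s t hs ht hst.
    destruct (tame_bounds x y B s t htame) as [[hxs _] [_ hyst]]; [lra | lra |].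
    assert (hxst : x s < x t) by (apply (tame_incr _ _ _ htame); lra).
    rewrite !quotient_dred by (auto || lra).
    apply Rmult_lt_compat_l; [apply Rmult_lt_0_compat; lra |].
    apply ratio_lt.
    + split; [apply (sat_bounds p j hp); exact hxs | apply (sat_lt p j hp); lra].
    + split.
      * apply (d_pos_iff p j hp); [lra | apply d_pos_before_root; lra].
      * apply (dred_le p j hp); lra.
  - intros s t hs ht hst.
    destruct (tame_bounds x y B s t htame) as [[hxs hxst] _]; [lra | lra |].
    apply (gY_le p j hp). lra.
Qed.

Lemma unbounded_next :
  unbounded_on_Ico (fun s => lam p j * Fb p j * x s / d p j (x s) (y s)) 0 z.
Proof.
  pose proof hp as (_ & _ & hl & hF & _).
  assert (hmid : 0 < x (z / 2)).
  { rewrite <- (tame_f0 _ _ _ htame). apply (tame_incr _ _ _ htame); lra. }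
  intros M.
  destruct (ratio_unbounded (fun s => lam p j * Fb p j * x s)
              (fun s => d p j (x s) (y s)) (z / 2) z) with M as [s [hs hM]].
  - lra.
  - apply (tame_cont_d p j x y B z htame). lra.
  - exact hroot.
  - apply Rmult_lt_0_compat; [apply Rmult_lt_0_compat |]; lra.
  - intros s hs. split; [apply d_pos_before_root; lra |].
    destruct (tame_bounds x y B (z / 2) s htame) as [[_ hle] _]; [lra | lra |].
    apply Rmult_le_compat_l; [apply Rmult_le_pos |]; lra.
  - exists s. split; [lra | exact hM].
Qed.

End LayerStep.

Lemma root_between p j x y B s1 : layer_pos p j -> tame_on x y B ->
  0 <= s1 < B -> Sb p j < x s1 -> exists z, 0 < z <= s1 /\ d p j (x z) (y z) = 0.
Proof.
  intros hp htame hs1 hx1. pose proof hp as (_ & _ & _ & _ & hS).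
  pose proof (tame_f0 _ _ _ htame) as hx0. pose proof (tame_g0 _ _ _ htame) as hy0.
  assert (hd0 : d p j (x 0) (y 0) = Sb p j) by (rewrite hx0, hy0; unfold d; ring).
  assert (hs1pos : 0 < s1) by (destruct (Req_dec s1 0) as [e | e]; [rewrite e in hx1 |]; lra).
  destruct (IVT_interv (fun s => - d p j (x s) (y s)) 0 s1) as [z [hz hdz]].
  - intros a ha. apply continuity_pt_opp, (tame_cont_d p j x y B a htame). lra.
  - exact hs1pos.
  - lra.
  - pose proof (d_neg_above_Sb p j hp (x s1) (y s1) hx1
                  ltac:(apply (tame_bounds x y B s1 s1 htame); lra)). lra.
  - exists z. split; [| lra].
    destruct (Req_dec z 0) as [e | e]; [rewrite e in hdz |]; lra.
Qed.

Lemma tame_d_pos_lt_root p j x y B s z : layer_pos p j -> tame_on x y B ->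
  0 <= s < B -> 0 <= z -> d p j (x z) (y z) = 0 -> 0 < d p j (x s) (y s) -> s < z.
Proof.
  intros hp htame hs hz hroot hpos. destruct (Rlt_le_dec s z) as [h | h]; [exact h | exfalso].
  destruct (tame_bounds x y B z s htame) as [hxz hyz]; [lra | lra |].
  pose proof (d_nonpos_above_root p j hp (x s) (x z) (y s) (y z) hxz (proj2 hyz) hroot). lra.
Qed.

Lemma tame_root_gt p j x y B s0 z : layer_pos p j -> tame_on x y B ->
  0 <= s0 < B -> 0 <= z -> d p j (x z) (y z) = 0 ->
  y s0 + x s0 + Fb p j * (delta p j + gamma p j) * x s0 < Sb p j -> s0 < z.
Proof.
  intros hp htame hs0 hz hroot hsmall. destruct (Rlt_le_dec s0 z) as [h | h]; [exact h | exfalso].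
  destruct (tame_bounds x y B z s0 htame) as [hxz hyz]; [lra | lra |].
  pose proof (d_pos_of_small p j hp _ _ _ _ hxz hyz hsmall). lra.
Qed.

(* Steps of the recursion are counted from the bottom layer: [fk p n k] is f_{n-k},
   [fYk p n k] is f^Y_{n-k+1}, and [dk p n k] is the denominator d_{n-k} of step k+1. *)
Definition fk (p : cascade) (n k : nat) (s : R) : R := fst (fpair p n k s).
Definition fYk (p : cascade) (n k : nat) (s : R) : R := snd (fpair p n k s).
Definition dk (p : cascade) (n k : nat) (s : R) : R :=
  d p (n - k) (fk p n k s) (fYk p n k s).

Lemma fk_succ p n k s :
  fk p n (S k) s = lam p (n - k) * Fb p (n - k) * fk p n k s / dk p n k s.
Proof. unfold dk, fk, fYk. simpl. destruct (fpair p n k s). reflexivity. Qed.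

Lemma fYk_succ p n k s : fYk p n (S k) s = gY p (n - k) (fk p n k s).
Proof. unfold fk, fYk. simpl. destruct (fpair p n k s). reflexivity. Qed.

Definition regular (p : cascade) (n k : nat) (B : R) : Prop :=
  regular_on (fk p n k) (fYk p n k) B.

Lemma tame_base p n B : tame_on (fk p n 0) (fYk p n 0) B.
Proof.
  constructor; try reflexivity.
  - intros s _. apply derivable_continuous_pt, derivable_pt_id.
  - intros s _. apply continuity_pt_const. intros ? ?; reflexivity.
  - intros s t _ _ hst. exact hst.
  - intros s t _ _ _. apply Rle_refl.
Qed.

Lemma regular_next p n k B s1 : layer_pos p (n - k) -> tame_on (fk p n k) (fYk p n k) B ->
  0 <= s1 < B -> Sb p (n - k) < fk p n k s1 ->
  exists z, 0 < z < B /\ dk p n k z = 0 /\ regular p n (S k) z.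
Proof.
  intros hp htame hs1 hx1.
  destruct (root_between p (n - k) _ _ B s1 hp htame hs1 hx1) as [z [hz hroot]].
  assert (hzB : 0 < z < B) by lra.
  exists z. split; [exact hzB | split; [exact hroot |]].
  apply (regular_on_ext _ _ _ _ _
           (fun s => eq_sym (fk_succ p n k s)) (fun s => eq_sym (fYk_succ p n k s))).
  constructor; [lra | apply tame_next with B | apply unbounded_next with B]; assumption.
Qed.

Lemma regular_first p n : layer_pos p n -> exists z, dk p n 0 z = 0 /\ regular p n 1 z.
Proof.
  intros hp. pose proof hp as (_ & _ & _ & _ & hS).
  destruct (regular_next p n 0 (Sb p n + 2) (Sb p n + 1)) as [z (_ & hroot & hreg)].
  - rewrite Nat.sub_0_r. exact hp.
  - apply tame_base.
  - lra.
  - rewrite Nat.sub_0_r. change (fk p n 0 (Sb p n + 1)) with (Sb p n + 1). lra.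
  - exists z. split; assumption.
Qed.

Lemma regular_exists p n : params_pos p n ->
  forall k, (1 <= k <= n)%nat -> exists B, regular p n k B.
Proof.
  intros hpp. induction k as [| k IH]; intros hk; [lia |].
  destruct (Nat.eq_dec k 0) as [-> | hk0].
  - destruct (regular_first p n (layer_pos_of p n n hpp ltac:(lia))) as [z [_ hreg]].
    exists z. exact hreg.
  - destruct (IH ltac:(lia)) as [B [_ htame hunb]].
    destruct (hunb (Sb p (n - k))) as [s1 [hs1 hx1]].
    destruct (regular_next p n k B s1 (layer_pos_of p n (n - k) hpp ltac:(lia)) htame hs1 hx1)
      as [z (_ & _ & hreg)].
    exists z. exact hreg.
Qed.

Lemma nat_bounded_choice {A : Type} (P : nat -> A -> Prop) N :
  (forall k, (k <= N)%nat -> exists a, P k a) ->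
  exists f : nat -> A, forall k, (k <= N)%nat -> P k (f k).
Proof.
  induction N as [| N IH]; intros hex.
  - destruct (hex 0%nat (le_n 0)) as [a ha].
    exists (fun _ => a). intros k hk. replace k with 0%nat by lia. exact ha.
  - destruct IH as [f hf]; [intros k hk; apply hex; lia |].
    destruct (hex (S N) (le_n _)) as [a ha].
    exists (fun k => if Nat.eqb k (S N) then a else f k). intros k hk.
    destruct (Nat.eqb_spec k (S N)) as [-> | hne]; [exact ha | apply hf; lia].
Qed.

Lemma regular_chain p n : params_pos p n ->
  exists b : nat -> R, forall k, (1 <= k <= n)%nat -> regular p n k (b k).
Proof.
  intros hpp.
  destruct (nat_bounded_choice (fun k B => (1 <= k)%nat -> regular p n k B) n) as [b hb].
  - intros k hk. destruct (Nat.eq_dec k 0) as [-> | hk0]; [exists 0; lia |].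
    destruct (regular_exists p n hpp k ltac:(lia)) as [B hB]. exists B. intros _. exact hB.
  - exists b. intros k hk. apply hb; lia.
Qed.

Lemma regular_succ_root p n k B B' : layer_pos p (n - k) ->
  regular p n k B -> regular p n (S k) B' -> B' < B /\ dk p n k B' = 0.
Proof.
  intros hp [_ htame hunb] hreg'.
  destruct (hunb (Sb p (n - k))) as [s1 [hs1 hx1]].
  destruct (regular_next p n k B s1 hp htame hs1 hx1) as [z (hz & hroot & hreg)].
  rewrite (regular_on_unique _ _ _ _ _ hreg' hreg). split; [lra | exact hroot].
Qed.

Lemma regular_base_root p n B' : layer_pos p n -> regular p n 1 B' -> dk p n 0 B' = 0.
Proof.
  intros hp hreg'. destruct (regular_first p n hp) as [z [hroot hreg]].
  rewrite (regular_on_unique _ _ _ _ _ hreg' hreg). exact hroot.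
Qed.

Lemma fpair_transfer p q n m : same_rates p q ->
  (forall j, (m <= j)%nat -> Fb q j = Fb p j /\ Sb q j = Sb p j) ->
  forall k, (k + m <= n + 1)%nat -> forall s, fpair q n k s = fpair p n k s.
Proof.
  intros (e1 & e2 & e3 & e4 & e5 & e6) hlayers.
  induction k as [| k IH]; intros hk s; [reflexivity |].
  simpl. rewrite IH by lia. destruct (fpair p n k s) as [fi fYi].
  destruct (hlayers (n - k)%nat ltac:(lia)) as [hF hS].
  unfold d, gY, lam, gamma, delta. rewrite e1, e2, e3, e4, e5, e6, hF, hS. reflexivity.
Qed.

Lemma prodR_empty g m : prodR g m m = 1.
Proof. destruct m; simpl; [| rewrite Nat.ltb_irrefl]; reflexivity. Qed.

Lemma prodR_low g i m : (i < m)%nat -> prodR g i m = g (S i) * prodR g (S i) m.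
Proof.
  induction m as [| m IH]; intros h; [lia |].
  simpl. replace (i <? S m)%nat with true by (symmetry; apply Nat.ltb_lt; lia).
  destruct (Nat.eq_dec i m) as [-> | hne].
  - rewrite prodR_empty, Nat.ltb_irrefl. ring.
  - replace (S i <? S m)%nat with true by (symmetry; apply Nat.ltb_lt; lia).
    rewrite IH by lia. ring.
Qed.

Lemma d_ff p n i s : (i < n)%nat ->
  d p (S i) (ff p n (S i) s) (fY p n (S (S i)) s) = dk p n (n - S i) s.
Proof.
  intros hi. unfold dk, ff, fY, fk, fYk.
  replace (n + 1 - S (S i))%nat with (n - S i)%nat by lia.
  replace (n - (n - S i))%nat with (S i) by lia. reflexivity.
Qed.

Lemma fk_prod p n k : (k <= n)%nat -> forall s,
  fk p n k s = prodR (fun j => lam p j * Fb p j) (n - k) n * s /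
               prodR (fun j => d p j (ff p n j s) (fY p n (S j) s)) (n - k) n.
Proof.
  induction k as [| k IH]; intros hk s.
  - rewrite Nat.sub_0_r, !prodR_empty. change (fk p n 0 s) with s. field.
  - rewrite fk_succ, IH by lia.
    rewrite (prodR_low (fun j => lam p j * Fb p j) (n - S k) n) by lia.
    rewrite (prodR_low (fun j => d p j (ff p n j s) (fY p n (S j) s)) (n - S k) n) by lia.
    rewrite d_ff by lia.
    replace (n - S (n - S k))%nat with k by lia. replace (S (n - S k)) with (n - k)%nat by lia.
    unfold Rdiv. rewrite Rinv_mult. ring.
Qed.

Section Bmss.
Variables (p : cascade) (n : nat) (S0 S1 F Y0 Y1 : nat -> R).
Hypotheses (hn : (1 <= n)%nat) (hpp : params_pos p n) (hB : BMSS p n S0 S1 F Y0 Y1).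

Definition Ynext (j : nat) : R := if Nat.eqb j n then 0 else Y0 (S j).

Lemma bm_eq j : (1 <= j <= n)%nat ->
  Y0 j = gamma p j * F j * S1 j /\ Y1 j = delta p j * F j * S1 j /\
  lam p j * F j * S1 j = S0 j * S1 (j - 1)%nat /\ Fb p j = F j + Y1 j /\
  Sb p j = S0 j + S1 j + Y0 j + Y1 j + Ynext j.
Proof. intros hj. destruct hB as [[h _] _]. apply h, hj. Qed.

Lemma bm_nonneg j : (1 <= j <= n)%nat ->
  0 <= S0 j /\ 0 <= S1 j /\ 0 <= F j /\ 0 <= Y0 j /\ 0 <= Y1 j.
Proof. intros hj. destruct hB as [_ [_ h]]. apply h, hj. Qed.

Lemma bm_F_pos j : (1 <= j <= n)%nat -> 0 < F j.
Proof.
  intros hj. destruct (bm_eq j hj) as (_ & eY1 & _ & eF & _).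
  destruct (bm_nonneg j hj) as (_ & _ & hF & _).
  destruct (layer_pos_of p n j hpp hj) as (_ & _ & _ & hFb & _).
  destruct hF as [hF | hF]; [exact hF |]. rewrite eF, eY1, <- hF in hFb. lra.
Qed.

Lemma bm_Ynext_nonneg j : (j <= n)%nat -> 0 <= Ynext j.
Proof.
  intros hj. unfold Ynext. destruct (Nat.eqb_spec j n); [lra |]. apply (bm_nonneg (S j)); lia.
Qed.

Lemma bm_d j : (1 <= j <= n)%nat -> d p j (S1 j) (Ynext j) = S0 j * (1 + delta p j * S1 j).
Proof.
  intros hj. destruct (bm_eq j hj) as (eY0 & eY1 & _ & eF & eS).
  unfold d. rewrite eS, eF, eY1, eY0. ring.
Qed.

(* An empty layer j empties layer j+1 (lam_{j+1} F_{j+1} S_{j+1}^1 = S_{j+1}^0 S_j^1), so its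
   conservation law reads Sbar_j = S_j^0 > 0, and S_j^0 S_{j-1}^1 = 0 empties layer j-1. *)
Lemma bm_S1_zero_prev j : (1 <= j <= n)%nat -> S1 j = 0 -> S1 (j - 1)%nat = 0.
Proof.
  intros hj h0.
  destruct (bm_eq j hj) as (eY0 & eY1 & eprod & _ & eS).
  destruct (layer_pos_of p n j hpp hj) as (_ & _ & _ & _ & hS).
  assert (hnext : Ynext j = 0).
  { unfold Ynext. destruct (Nat.eqb_spec j n) as [e | hjn]; [reflexivity |].
    destruct (bm_eq (S j) ltac:(lia)) as (eY0' & _ & eprod' & _ & _).
    destruct (layer_pos_of p n (S j) hpp ltac:(lia)) as (_ & _ & hl & _ & _).
    pose proof (bm_F_pos (S j) ltac:(lia)) as hF'.
    replace (S j - 1)%nat with j in eprod' by lia. rewrite h0, Rmult_0_r in eprod'.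
    assert (hnext0 : S1 (S j) = 0).
    { apply Rmult_integral in eprod'. destruct eprod' as [e | e]; [| exact e].
      exfalso. apply Rmult_integral in e. destruct e; nra. }
    rewrite eY0', hnext0. ring. }
  rewrite eY0, eY1, h0, hnext in eS. rewrite h0, Rmult_0_r in eprod.
  symmetry in eprod. apply Rmult_integral in eprod. destruct eprod as [e | e]; [lra | exact e].
Qed.

Lemma bm_S1_pos j : (j <= n)%nat -> 0 < S1 j.
Proof.
  induction j as [| j IH]; intros hj.
  - destruct hB as [[_ hE] [h0 _]]. destruct hpp as [hEb _].
    destruct h0 as [h0 | h0]; [exact h0 | exfalso].
    destruct (bm_eq 1 ltac:(lia)) as (eY0 & _ & eprod & _).
    destruct (layer_pos_of p n 1 hpp ltac:(lia)) as (_ & _ & hl & _ & _).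
    pose proof (bm_F_pos 1 ltac:(lia)) as hF.
    replace (1 - 1)%nat with 0%nat in eprod by lia. rewrite <- h0, Rmult_0_r in eprod.
    assert (hS11 : S1 1%nat = 0).
    { apply Rmult_integral in eprod. destruct eprod as [e | e]; [| exact e].
      exfalso. apply Rmult_integral in e. destruct e; nra. }
    rewrite eY0, hS11, <- h0 in hE. lra.
  - destruct (bm_nonneg (S j) ltac:(lia)) as (_ & [h | h] & _); [exact h | exfalso].
    pose proof (bm_S1_zero_prev (S j) ltac:(lia) (eq_sym h)) as hprev.
    replace (S j - 1)%nat with j in hprev by lia. specialize (IH ltac:(lia)). lra.
Qed.

Lemma bm_S0_pos j : (1 <= j <= n)%nat -> 0 < S0 j.
Proof.
  intros hj. destruct (bm_eq j hj) as (_ & _ & eprod & _).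
  destruct (layer_pos_of p n j hpp hj) as (_ & _ & hl & _ & _).
  pose proof (bm_F_pos j hj). pose proof (bm_S1_pos j ltac:(lia)).
  pose proof (bm_S1_pos (j - 1) ltac:(lia)).
  destruct (bm_nonneg j hj) as ([h | h] & _); [exact h | exfalso].
  rewrite <- h, Rmult_0_l in eprod.
  assert (0 < lam p j * F j * S1 j)
    by (apply Rmult_lt_0_compat; [apply Rmult_lt_0_compat |]; lra).
  lra.
Qed.

Lemma bm_d_pos j : (1 <= j <= n)%nat -> 0 < d p j (S1 j) (Ynext j).
Proof.
  intros hj. rewrite bm_d by exact hj.
  pose proof (bm_S0_pos j hj). pose proof (bm_S1_pos j ltac:(lia)).
  destruct (layer_pos_of p n j hpp hj) as (hd & _).
  apply Rmult_lt_0_compat; nra.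
Qed.

Lemma bm_below_alpha j a : (1 <= j <= n)%nat -> 0 < a -> d p j a 0 = 0 -> S1 j < a.
Proof.
  intros hj ha hroot. pose proof (bm_d_pos j hj) as hpos.
  pose proof (bm_Ynext_nonneg j ltac:(lia)).
  destruct (Rlt_le_dec (S1 j) a) as [h | h]; [exact h | exfalso].
  pose proof (d_nonpos_above_root p j (layer_pos_of p n j hpp hj) (S1 j) a (Ynext j) 0
                ltac:(lra) ltac:(lra) hroot).
  lra.
Qed.

Lemma bm_fk k : (k <= n)%nat ->
  S1 (n - k)%nat = fk p n k (S1 n) /\ Ynext (n - k) = fYk p n k (S1 n).
Proof.
  induction k as [| k IH]; intros hk.
  - rewrite Nat.sub_0_r. unfold Ynext. rewrite Nat.eqb_refl. split; reflexivity.
  - destruct (IH ltac:(lia)) as [hS1 hY]. set (j := (n - k)%nat) in *.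
    assert (hj : (1 <= j <= n)%nat) by (unfold j; lia).
    destruct (bm_eq j hj) as (eY0 & eY1 & eprod & eF & _).
    destruct (layer_pos_of p n j hpp hj) as (hd & _).
    pose proof (bm_S0_pos j hj). pose proof (bm_S1_pos j ltac:(lia)).
    replace (n - S k)%nat with (j - 1)%nat by (unfold j; lia).
    rewrite fk_succ, fYk_succ. fold j. unfold dk. fold j. rewrite <- hS1, <- hY. split.
    + rewrite bm_d, eF, eY1 by exact hj.
      apply Rmult_eq_reg_l with (S0 j); [| lra]. rewrite <- eprod. field. split; nra.
    + unfold Ynext. destruct (Nat.eqb_spec (j - 1) n) as [e | _]; [lia |].
      replace (S (j - 1)) with j by lia. unfold gY. rewrite eY0, eF, eY1. field. nra.
Qed.

Lemma bm_dk_pos k : (k < n)%nat -> 0 < dk p n k (S1 n).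
Proof.
  intros hk. destruct (bm_fk k ltac:(lia)) as [hS1 hY].
  unfold dk. rewrite <- hS1, <- hY. apply bm_d_pos. lia.
Qed.

Lemma bm_below_roots (b : nat -> R) : (forall k, (1 <= k <= n)%nat -> regular p n k (b k)) ->
  forall k, (1 <= k <= n)%nat -> S1 n < b k.
Proof.
  intros hb. pose proof (bm_S1_pos n (le_n n)) as hS1n.
  induction k as [| k IH]; intros hk; [lia |].
  pose proof (layer_pos_of p n (n - k) hpp ltac:(lia)) as hp.
  pose proof (regular_pos _ _ _ (hb (S k) hk)) as hbpos.
  destruct (Nat.eq_dec k 0) as [-> | hk0].
  - apply (tame_d_pos_lt_root p (n - 0) _ _ (S1 n + 1) _ _ hp (tame_base p n _));
      [lra | lra | | apply bm_dk_pos; lia].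
    apply regular_base_root; [rewrite <- Nat.sub_0_r; exact hp | apply hb; lia].
  - pose proof (hb k ltac:(lia)) as hreg.
    apply (tame_d_pos_lt_root p (n - k) _ _ (b k) _ _ hp (regular_tame _ _ _ hreg));
      [split; [lra | apply IH; lia] | lra | | apply bm_dk_pos; lia].
    apply (regular_succ_root p n k (b k)); [exact hp | exact hreg | apply hb; lia].
Qed.

Lemma bm_branch (b : nat -> R) : (forall k, (1 <= k <= n)%nat -> regular p n k (b k)) ->
  forall i, (i < n)%nat -> 0 <= S1 n < b (n - i)%nat /\ S1 i = fk p n (n - i) (S1 n).
Proof.
  intros hb i hi. pose proof (bm_S1_pos n (le_n n)).
  split; [split; [lra | apply (bm_below_roots b hb); lia] |].
  destruct (bm_fk (n - i) ltac:(lia)) as [hS1 _].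
  replace (n - (n - i))%nat with i in hS1 by lia. exact hS1.
Qed.

End Bmss.

Lemma setSb_params_pos p n k t : params_pos p n -> 0 < t -> params_pos (setSb p k t) n.
Proof.
  intros [hE hpos] ht. split; [exact hE |]. intros i hi.
  destruct (hpos i hi) as (h1 & h2 & h3 & h4 & h5 & h6 & h7 & h8).
  cbn. repeat split; try assumption. destruct (Nat.eqb i k); assumption.
Qed.

Lemma Sb_setSb p k t : Sb (setSb p k t) k = t.
Proof. cbn. rewrite Nat.eqb_refl. reflexivity. Qed.

(* Raising Sbar_{i+1} leaves f_{i+1} untouched and moves the root of d_{i+1} past any
   point s0 < beta_{i+1}, so beta_i is squeezed between s0 and beta_{i+1}. *)
Lemma sing_tends_next p n i B : params_pos p n -> (S i < n)%nat -> regular p n (n - S i) B ->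
  forall eps, 0 < eps -> exists T, forall t, T < t -> 0 < t ->
    exists bb, min_pos_sing (ff (setSb p (S i) t) n i) bb /\ Rabs (bb - B) < eps.
Proof.
  intros hpp hi hreg eps heps.
  set (k := (n - S i)%nat). replace (n - S i)%nat with k in hreg by reflexivity.
  assert (hki : (n - k)%nat = S i) by (unfold k; lia).
  pose proof (regular_pos _ _ _ hreg) as hB.
  set (s0 := Rmax 0 (B - eps / 2)).
  assert (hs0 : 0 <= s0 < B /\ B - eps / 2 <= s0)
    by (unfold s0; repeat split; [apply Rmax_l | apply Rmax_lub_lt | apply Rmax_r]; lra).
  set (X := fk p n k s0). set (Y := fYk p n k s0).
  exists (Y + X + Fb p (S i) * (delta p (S i) + gamma p (S i)) * X).
  intros t hT ht. set (q := setSb p (S i) t).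
  assert (hqp : params_pos q n) by (apply setSb_params_pos; assumption).
  assert (htrans : forall s, fpair q n k s = fpair p n k s).
  { apply (fpair_transfer p q n (S (S i))); [repeat split | | unfold k; lia].
    intros j hj. cbn. destruct (Nat.eqb_spec j (S i)); [lia | split; reflexivity]. }
  assert (hregq : regular q n k B).
  { apply (regular_on_ext (fk p n k) (fYk p n k)); [| | exact hreg];
      intros s; unfold fk, fYk; rewrite htrans; reflexivity. }
  destruct hregq as [_ htame hunb].
  destruct (hunb (Sb q (n - k))) as [s1 [hs1 hx1]].
  destruct (regular_next q n k B s1 (layer_pos_of q n (n - k) hqp ltac:(lia)) htame hs1 hx1)
    as [z (hz & hroot & hregz)].
  exists z. split.
  - change (ff q n i) with (fk q n (n - i)). replace (n - i)%nat with (S k) by lia.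
    exact (regular_on_sing _ _ _ hregz).
  - assert (hlow : s0 < z).
    { apply (tame_root_gt q (n - k) _ _ B s0 z (layer_pos_of q n (n - k) hqp ltac:(lia)) htame);
        [lra | lra | exact hroot |].
      replace (fk q n k s0) with X by (unfold X, fk; rewrite htrans; reflexivity).
      replace (fYk q n k s0) with Y by (unfold Y, fYk; rewrite htrans; reflexivity).
      rewrite hki. unfold q. rewrite Sb_setSb. exact hT. }
    rewrite Rabs_left; lra.
Qed.

Lemma sing_tends_infinity p n i : params_pos p n -> S i = n ->
  forall M, exists T, forall t, T < t -> 0 < t ->
    exists bb, min_pos_sing (ff (setSb p (S i) t) n i) bb /\ M < bb.
Proof.
  intros hpp hi M. set (X := Rmax M 0).
  assert (hX : M <= X /\ 0 <= X) by (unfold X; split; [apply Rmax_l | apply Rmax_r]).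
  exists (0 + X + Fb p n * (delta p n + gamma p n) * X).
  intros t hT ht. set (q := setSb p (S i) t).
  assert (hqp : params_pos q n) by (apply setSb_params_pos; assumption).
  pose proof (layer_pos_of q n n hqp ltac:(lia)) as hq.
  destruct (regular_first q n hq) as [z [hroot hregz]].
  exists z. split.
  - change (ff q n i) with (fk q n (n - i)). replace (n - i)%nat with 1%nat by lia.
    exact (regular_on_sing _ _ _ hregz).
  - unfold dk in hroot. rewrite Nat.sub_0_r in hroot.
    assert (hlow : X < z).
    { apply (tame_root_gt q n _ _ (X + 1) X z hq (tame_base q n _));
        [lra | apply Rlt_le, (regular_pos _ _ _ hregz) | exact hroot |].
      change (fk q n 0 X) with X. change (fYk q n 0 X) with 0.
      unfold q. rewrite hi, Sb_setSb. exact hT. }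
    lra.
Qed.

Lemma chain_roots p n b : params_pos p n ->
  (forall k, (1 <= k <= n)%nat -> regular p n k (b k)) ->
  forall k, (k < n)%nat -> dk p n k (b (S k)) = 0 /\ ((1 <= k)%nat -> b (S k) < b k).
Proof.
  intros hpp hb k hk. pose proof (layer_pos_of p n (n - k) hpp ltac:(lia)) as hp.
  destruct (Nat.eq_dec k 0) as [-> | hk0].
  - split; [| lia]. apply regular_base_root; [rewrite <- Nat.sub_0_r; exact hp | apply hb; lia].
  - destruct (regular_succ_root p n k (b k) (b (S k)) hp) as [hlt hroot]; [apply hb; lia.. |].
    split; [exact hroot | intros _; exact hlt].
Qed.

Lemma chain_first_root p n b a : (1 <= n)%nat -> params_pos p n ->
  (forall k, (1 <= k <= n)%nat -> regular p n k (b k)) ->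
  0 < a -> d p n a 0 = 0 -> b 1%nat = a.
Proof.
  intros hn hpp hb ha hroot. pose proof (hb 1%nat ltac:(lia)) as hreg.
  pose proof (layer_pos_of p n n hpp ltac:(lia)) as hp.
  pose proof (regular_base_root p n (b 1%nat) hp hreg) as hroot1.
  unfold dk in hroot1. rewrite Nat.sub_0_r in hroot1.
  apply (d_root_unique p n hp); [| lra | exact hroot1 | exact hroot].
  apply Rlt_le, (regular_pos _ _ _ hreg).
Qed.

Theorem mainTheorem6 (n : nat) (p : cascade) :
  (1 <= n)%nat -> params_pos p n ->
  forall alpha : nat -> R,
  (forall j, (1 <= j <= n)%nat -> 0 < alpha j /\ d p j (alpha j) 0 = 0) ->
  exists beta : nat -> R,
    (forall i, (i < n)%nat ->
       0 < beta i /\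
       ff p n i 0 = 0 /\
       cont_on_Ico (ff p n i) 0 (beta i) /\
       incr_on_Ico (ff p n i) 0 (beta i) /\
       onto_nonneg_Ico (ff p n i) 0 (beta i) /\
       min_pos_sing (ff p n i) (beta i) /\
       d p (S i) (ff p n (S i) (beta i)) (fY p n (S (S i)) (beta i)) = 0 /\
       (forall S0 S1 F Y0 Y1, BMSS p n S0 S1 F Y0 Y1 ->
          0 <= S1 n < beta i /\ S1 i = ff p n i (S1 n)) /\
       (forall q : cascade, same_rates p q ->
          (forall j, (S i <= j)%nat -> Fb q j = Fb p j /\ Sb q j = Sb p j) ->
          forall s, ff q n i s = ff p n i s) /\
       (forall s, 0 <= s < beta i ->
          ff p n i s =
            prodR (fun j => lam p j * Fb p j) i n * s /
            prodR (fun j => d p j (ff p n j s) (fY p n (S j) s)) i n) /\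
       ((S i < n)%nat ->
          forall eps, 0 < eps -> exists T, forall t, T < t -> 0 < t ->
            exists b, min_pos_sing (ff (setSb p (S i) t) n i) b /\
                      Rabs (b - beta (S i)) < eps) /\
       (S i = n ->
          forall M, exists T, forall t, T < t -> 0 < t ->
            exists b, min_pos_sing (ff (setSb p (S i) t) n i) b /\ M < b)) /\
    beta (n - 1)%nat = alpha n /\
    (forall i, (S (S i) <= n)%nat -> beta i < beta (S i)) /\
    (forall S0 S1 F Y0 Y1, BMSS p n S0 S1 F Y0 Y1 ->
       forall j, (1 <= j <= n)%nat -> S1 j < alpha j).
Proof.
  intros hn hpp alpha halpha.
  destruct (regular_chain p n hpp) as [b hb].
  pose proof (chain_roots p n b hpp hb) as hroots.
  exists (fun i => b (n - i)%nat). split; [| split; [| split]].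
  - intros i hi. pose proof (hb (n - i)%nat ltac:(lia)) as hreg.
    change (ff p n i) with (fk p n (n - i)).
    destruct (regular_on_props _ _ _ hreg) as (h0 & hcont & hincr & honto & hsing).
    split; [exact (regular_pos _ _ _ hreg) |]. do 5 (split; [assumption |]).
    split.
    { rewrite d_ff by exact hi. replace (n - i)%nat with (S (n - S i)) by lia.
      apply hroots; lia. }
    split.
    { intros S0 S1 F Y0 Y1 hB. exact (bm_branch p n S0 S1 F Y0 Y1 hn hpp hB b hb i hi). }
    split.
    { intros q hq hlayers s. unfold ff, fk.
      rewrite (fpair_transfer p q n (S i) hq hlayers); [reflexivity | lia]. }
    split.
    { intros s _. rewrite fk_prod by lia. replace (n - (n - i))%nat with i by lia. reflexivity. }
    split.
    { intros hsi. apply (sing_tends_next p n i); [exact hpp | exact hsi | apply hb; lia]. }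
    intros hsi. apply sing_tends_infinity; assumption.
  - replace (n - (n - 1))%nat with 1%nat by lia.
    destruct (halpha n ltac:(lia)) as [ha hroot].
    exact (chain_first_root p n b (alpha n) hn hpp hb ha hroot).
  - intros i hi. replace (n - i)%nat with (S (n - S i)) by lia. apply hroots; lia.
  - intros S0 S1 F Y0 Y1 hB j hj. destruct (halpha j hj) as [ha hroot].
    exact (bm_below_alpha p n S0 S1 F Y0 Y1 hn hpp hB j (alpha j) hj ha hroot).
Qed.
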